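(* Let $R$ be an associative ring with identity and involution $*$, and let $a\in R^{\#}\cap R^{\dagger}$. Then $a\in R^{SEP}$ if and only if $a^{\dagger}a^3a^*a^{\dagger}\in PE(R)$.
   Context: An involution on $R$ is a map $x\mapsto x^*$ with $(x^* )^*=x$, $(x+y)^*=x^*+y^*$, $(xy)^*=y^*x^*$. An element $a$ is Moore–Penrose invertible if there is $b$ with $aba=a$, $bab=b$, $(ab)^*=ab$, $(ba)^*=ba$; such $b$ is unique, denoted $a^{\dagger}$, and $R^{\dagger}$ is the set of such $a$. An element $a$ is group invertible if there is $b$ with $aba=a$, $bab=b$, $ab=ba$; such $b$ is unique, denoted $a^{\#}$, and $R^{\#}$ is the set of such $a$. $PE(R)=\{e\in R: e^2=e=e^*\}$ is the set of projections. For $a\in R^{\#}\cap R^{\dagger}$, $a$ is SEP if $a^*=a^{\dagger}=a^{\#}$; $R^{SEP}$ denotes the set of SEP elements. *)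

From HB Require Import structures.
From mathcomp Require Import all_boot all_algebra.
Set Implicit Arguments. Unset Strict Implicit. Unset Printing Implicit Defensive.
Import GRing.Theory.
Local Open Scope ring_scope.

Record involution (R : pzRingType) := Involution {
  inv_fun :> R -> R;
  inv_invol : forall x, inv_fun (inv_fun x) = x;
  inv_add : forall x y, inv_fun (x + y) = inv_fun x + inv_fun y;
  inv_mul : forall x y, inv_fun (x * y) = inv_fun y * inv_fun x
}.

Section Defs.
Variables (R : pzRingType) (star : involution R).

Definition is_mp_inverse (a b : R) : Prop :=
  a * b * a = a /\ b * a * b = b /\ star (a * b) = a * b /\ star (b * a) = b * a.

Definition is_group_inverse (a b : R) : Prop :=
  a * b * a = a /\ b * a * b = b /\ a * b = b * a.

Definition mp_invertible (a : R) : Prop := exists b, is_mp_inverse a b.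
Definition group_invertible (a : R) : Prop := exists b, is_group_inverse a b.

Definition is_projection (e : R) : Prop := e * e = e /\ e = star e.

(* a is SEP : a^* = a^dagger = a^#  (inverses are unique, so it is enough to say
   a^* is both the Moore-Penrose and the group inverse of a) *)
Definition is_SEP (a : R) : Prop :=
  is_mp_inverse a (star a) /\ is_group_inverse a (star a).
End Defs.

From mathcomp Require Import all_boot all_algebra.
Set Implicit Arguments.
Unset Strict Implicit.
Unset Printing Implicit Defensive.

(* SEP means that a is a normal partial isometry: a a^* a = a and
   a a^* = a^* a.  Then a^* is a Moore-Penrose inverse of a, hence a^† = a^*
   by uniqueness, and p := a^† a^3 a^* a^† collapses to the projection a a^*.
   Conversely, let p be a projection.  Since p ends with a^†, p = p^* lies in
   a a^† R, while a^† a = p w for a w built from a^#; so a^† a <= a a^† as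
   projections, and the group inverse upgrades this to a a^† = a^† a.  For
   such an EP element, p p = p multiplied by (a^†)^2 on the left and a on the
   right becomes a^* a a^* = a^*, so again a^† = a^* and a is SEP. *)

Import GRing.Theory.
Local Open Scope ring_scope.

Section Involution.
Variables (R : pzRingType) (star : involution R).

Section MoorePenrose.
Variables (a b : R).
Hypothesis mp : is_mp_inverse star a b.

Let aba : a * b * a = a := proj1 mp.
Let bab : b * a * b = b := proj1 (proj2 mp).
Let ab_herm : star (a * b) = a * b := proj1 (proj2 (proj2 mp)).
Let ba_herm : star (b * a) = b * a := proj2 (proj2 (proj2 mp)).

Lemma star_mp_l : b * a * star a = star a.
Proof. by rewrite -ba_herm -inv_mul mulrA aba. Qed.

Lemma star_mp_r : star a * a * b = star a.
Proof. by rewrite -mulrA -ab_herm -inv_mul aba. Qed.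

Lemma mp_star_l : b * star b * star a = b.
Proof. by rewrite -mulrA -inv_mul ab_herm mulrA bab. Qed.

Lemma mp_star_r : star a * star b * b = b.
Proof. by rewrite -inv_mul ba_herm bab. Qed.

Lemma star_mulr_mp x : a * b * star (x * b) = star (x * b).
Proof.
have ab_star_b : a * b * star b = star b.
  by rewrite -[X in _ = star X]mp_star_l !inv_mul !inv_invol mulrA.
by rewrite inv_mul mulrA ab_star_b.
Qed.

End MoorePenrose.

Lemma mp_inverse_unique (a b c : R) :
  is_mp_inverse star a b -> is_mp_inverse star a c -> b = c.
Proof.
move=> mpb mpc; transitivity (b * a * c).
  by rewrite -{1}(mp_star_l mpb) -(star_mp_r mpc) !mulrA (mp_star_l mpb).
rewrite -{2}(mp_star_r mpc) -(star_mp_l mpb).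
by rewrite -!mulrA (mulrA (star a)) (mp_star_r mpc).
Qed.

Lemma mp_inverse_star (a : R) :
  a * star a * a = a -> is_mp_inverse star a (star a).
Proof.
move=> aa'a; have a'aa' : star a * a * star a = star a.
  by rewrite -[X in _ = star X]aa'a !inv_mul inv_invol mulrA.
by rewrite /is_mp_inverse !inv_mul !inv_invol.
Qed.

Lemma SEP_iff (a : R) :
  is_SEP star a <-> a * star a * a = a /\ a * star a = star a * a.
Proof.
split=> [[[aa'a _] [_ [_ normal]]] // | [aa'a normal]].
have [_ [a'aa' _]] := mp_inverse_star aa'a.
by split; [exact: mp_inverse_star | split].
Qed.

Lemma is_projection_mul_star (a : R) :
  a * star a * a = a -> is_projection star (a * star a).
Proof. by move=> aa'a; rewrite /is_projection mulrA aa'a inv_mul inv_invol. Qed.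

Lemma mul_star_expr3_star (a : R) : a * star a * a = a ->
  a * star a = star a * a -> star a * a ^+ 3 * star a * star a = a * star a.
Proof.
move=> aa'a normal; rewrite [a ^+ 3]exprS expr2 !mulrA -normal aa'a.
by rewrite -(mulrA a a) {1}normal mulrA aa'a.
Qed.

Section MoorePenroseGroup.
Variables (a b h : R).
Hypotheses (mp : is_mp_inverse star a b) (grp : is_group_inverse a h).

Let aba : a * b * a = a := proj1 mp.
Let ab_herm : star (a * b) = a * b := proj1 (proj2 (proj2 mp)).
Let ba_herm : star (b * a) = b * a := proj2 (proj2 (proj2 mp)).
Let aha : a * h * a = a := proj1 grp.
Let ah_ha : a * h = h * a := proj2 (proj2 grp).

(* Stated with an arbitrary left factor so that they rewrite inside
   left-associated products. *)
Let mulr_aba x : x * a * b * a = x * a.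
Proof. by rewrite -!mulrA (mulrA a) aba. Qed.
Let mulr_aah x : x * a * a * h = x * a.
Proof. by rewrite -!mulrA ah_ha (mulrA a) aha. Qed.
Let mulr_star_mp_l x : x * b * a * star a = x * star a.
Proof. by rewrite -!mulrA (mulrA b) (star_mp_l mp). Qed.
Let mulr_star_mp_r x : x * star a * a * b = x * star a.
Proof. by rewrite -!mulrA (mulrA (star a)) (star_mp_r mp). Qed.
Let mulr_star_haa x : x * star a * star a * star h = x * star a.
Proof. by rewrite -!mulrA -!inv_mul -ah_ha aha. Qed.
Let mulr_star_ba x : x * star a * star b = x * b * a.
Proof. by rewrite -mulrA -inv_mul ba_herm mulrA. Qed.

Let p := b * a ^+ 3 * star a * b.

Lemma ba_in_pR : b * a = p * (a * star a * star h * star b * h ^+ 2).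
Proof.
rewrite /p [a ^+ 3]exprS !expr2 !mulrA.
by rewrite mulr_star_mp_l mulr_star_haa mulr_star_ba mulr_aba !mulr_aah.
Qed.

Lemma EP_of_ba_le_ab : b * a = a * b * (b * a) -> a * b = b * a.
Proof.
move=> ba_le.
have ba_ge : b * a = b * a * (a * b).
  by rewrite -{1}ba_herm {1}ba_le inv_mul ba_herm ab_herm.
have aab : a * a * b = a by rewrite -[RHS]aba -(mulrA a b a) ba_ge !mulrA aba.
have ha_ab : h * a = a * b by rewrite -{1}aab !mulrA -ah_ha aha.
by rewrite ba_le -ha_ab mulrA mulr_aba.
Qed.

Lemma partial_isometry_of_p_idem : a * b = b * a -> p * p = p -> a * star a * a = a.
Proof.
move=> ep.
have mulr_baa x : x * b * a * a = x * a by rewrite -!mulrA (mulrA b) -ep aba.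
have mulr_ba x : x * b * a = x * a * b by rewrite -mulrA -ep mulrA.
have p_eq : p = a * a * star a * b.
  by rewrite /p [a ^+ 3]exprS expr2 !mulrA -ep aba.
move=> /(congr1 (fun y => b * b * y * a)); rewrite p_eq !mulrA !mulr_baa.
rewrite (star_mp_l mp) !mulr_ba !mulr_star_mp_r (star_mp_r mp) => /(congr1 star).
by rewrite !inv_mul !inv_invol mulrA.
Qed.

Lemma EP_of_p_herm : p = star p -> a * b = b * a.
Proof.
move=> p_herm; apply: EP_of_ba_le_ab.
have p_range : p = a * b * p by rewrite p_herm /p (star_mulr_mp mp).
by rewrite {1}ba_in_pR {1}p_range -mulrA -ba_in_pR.
Qed.

End MoorePenroseGroup.

End Involution.

Theorem theorem2p5 (R : pzRingType) (star : involution R) (a adag asharp : R) :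
  is_mp_inverse star a adag -> is_group_inverse a asharp ->
  (is_SEP star a <-> is_projection star (adag * a ^+ 3 * star a * adag)).
Proof.
move=> mp grp; split=> [/SEP_iff [aa'a normal] | [p_idem p_herm]].
  have adag_star := mp_inverse_unique mp (mp_inverse_star aa'a).
  by rewrite adag_star mul_star_expr3_star //; exact: is_projection_mul_star.
have ep := EP_of_p_herm mp grp p_herm.
have aa'a := partial_isometry_of_p_idem mp ep p_idem.
have adag_star := mp_inverse_unique mp (mp_inverse_star aa'a).
by apply/SEP_iff; rewrite adag_star in ep.
Qed.
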